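(* Let $0<p<1$, let $m$ be a median of $\vartheta(G(n,p))$ (i.e. $\Pr(\vartheta(G(n,p))\leq m)\geq1/2$ and $\Pr(\vartheta(G(n,p))\geq m)\geq1/2$), let $\vartheta_0>0$ be any number, and let $\xi\geq10$. Then $$\Pr\big(m+\xi\leq\vartheta(G(n,p))\leq\vartheta_0\big)\leq 2\exp(-\xi^2/(5\vartheta_0)).$$
   Context: $G(n,p)$ is the random graph on $\{1,\dots,n\}$ with each possible edge present independently with probability $p$. $\vartheta(G)$ is the Lovász number of $G$; equivalently, $\vartheta(G)$ is the maximum of $\sum_{i=1}^n c(v_i)$ over all tuples $(v_1,\dots,v_n)$ of vectors in some $\mathbb R^d$ with $v_i\perp v_j$ whenever $\{i,j\}$ is an edge of $G$, where $c(a)=a_1^2/\|a\|^2$ for $a\neq0$ and $c(0)=0$. *)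

From HB Require Import structures.
From mathcomp Require Import all_boot all_order all_algebra.
From mathcomp Require Import all_classical all_reals.
From mathcomp Require Import all_analysis.
Set Implicit Arguments. Unset Strict Implicit. Unset Printing Implicit Defensive.
Import Order.TTheory GRing.Theory Num.Theory.
Local Open Scope ring_scope.
Local Open Scope classical_set_scope.

(* Potential edges of a graph on {1..n} (here 'I_n): unordered pairs {i,j},
   represented by ordered pairs (i,j) with i < j. *)
Definition pairT (n : nat) := {x : 'I_n * 'I_n | (x.1 < x.2)%N}.

Definition graph (n : nat) := {set pairT n}.

Definition adj (n : nat) (E : graph n) (i j : 'I_n) : bool :=
  [exists e in E, (val e == (i, j)) || (val e == (j, i))].

Definition gnp_weight (R : realType) (n : nat) (p : R) (E : graph n) : R :=
  p ^+ #|E| * (1 - p) ^+ (#|[set: pairT n]| - #|E|).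

Definition gnp_prob (R : realType) (n : nat) (p : R) (A : graph n -> bool) : R :=
  \sum_(E : graph n | A E) gnp_weight p E.

Definition dotv (R : realType) (d : nat) (a b : 'rV[R]_d) : R :=
  \sum_(k < d) a 0 k * b 0 k.

Definition cfun (R : realType) (d : nat) (a : 'rV[R]_d.+1) : R :=
  if a == 0 then 0 else (a 0 ord0) ^+ 2 / dotv a a.

(* Values sum_i c(v_i) over orthogonal representations v in R^d (d >= 1). *)
Definition theta_vals (R : realType) (n : nat) (E : graph n) : set R :=
  [set s | exists (d : nat) (v : 'I_n -> 'rV[R]_d.+1),
      (forall i j : 'I_n, adj E i j -> dotv (v i) (v j) = 0) /\
      s = \sum_(i < n) cfun (v i)].

Definition theta (R : realType) (n : nat) (E : graph n) : R := sup (@theta_vals R n E).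

(* Expose G(n,p) vertex by vertex: it becomes a product measure whose i-th
   coordinate is the set of edges from vertex i to smaller vertices.  For a
   product of sub-probability weights, Talagrand's convex-distance inequality
   P(A) E[exp(d_T(A,.)^2 / 4)] <= 1 holds by induction on the number of
   coordinates.  Take A = {theta <= m}, of probability >= 1/2.  If
   theta(x) >= m + xi and v is a near-optimal representation for x with
   weights c_i = c(v_i), then deleting the vectors at the vertices where y
   differs from x gives a representation for y, so every y in A has
   sum_{y_i <> x_i} c_i >= 0.9 xi.  Since sum c_i^2 <= sum c_i <= theta0,
   this forces d_T(A,x)^2 >= (0.9 xi)^2 / theta0, and 0.81/4 >= 1/5. *)

From HB Require Import structures.
From mathcomp Require Import all_boot all_order all_algebra.
From mathcomp Require Import all_classical all_reals.
From mathcomp Require Import all_analysis.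
From mathcomp Require Import ring lra.
Import Order.TTheory GRing.Theory Num.Theory.
Local Open Scope ring_scope.
Set Implicit Arguments. Unset Strict Implicit. Unset Printing Implicit Defensive.

Lemma expR_convex_comb (R : realType) (l u v : R) : 0 <= l <= 1 ->
  expR ((1 - l) * u + l * v) <= (1 - l) * expR u + l * expR v.
Proof.
move=> /andP[l0 l1]; have := convex_expR (Itv01 l0 l1) v u.
by rewrite !convRE /= addrC [X in _ <= X]addrC.
Qed.

Lemma expR_mul_subr_le1 (R : realType) (x : R) : expR x * (1 - x) <= 1.
Proof.
rewrite -[leRHS](mulfV (lt0r_neq0 (expR_gt0 x))) -expRN.
by apply: ler_wpM2l; [exact: expR_ge0 | exact: expR_ge1Dx].
Qed.

(* The numerical core of the inductive step of Talagrand's inequality, for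
   [sigma = 1 - P(slice) / P(shadow)]. *)
Lemma talagrand_step_ineq (R : realType) (sigma X Y : R) :
  0 <= sigma <= 1 / 2 -> X * (1 - sigma) <= 1 -> Y <= 1 ->
  expR (sigma ^+ 2) * ((1 - 2 * sigma) * X + 2 * sigma * Y) <= 1 + sigma.
Proof.
move=> /andP[s0 s1] hX hY; set E := expR (sigma ^+ 2); set T := _ + _.
have E1 : 1 <= E by rewrite -expR0 ler_expR sqr_ge0.
have E_le : E * (1 - sigma ^+ 2) <= 1 by apply: expR_mul_subr_le1.
have T_le : T * (1 - sigma) <= 1 - 2 * sigma ^+ 2.
  have : 0 <= sigma * (1 - sigma) by rewrite mulr_ge0 // subr_ge0; lra.
  rewrite /T; nra.
have : E * T * (1 - sigma) <= (1 + sigma) * (1 - sigma).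
  rewrite -mulrA; have := ler_wpM2l (ltW (lt_le_trans ltr01 E1)) T_le; nra.
by rewrite ler_pM2r //; lra.
Qed.

Section ConvexDistance.
Variables (R : realType) (S : finType) (w : nat -> S -> R).
Hypothesis w_ge0 : forall i s, 0 <= w i s.

Definition omega k := {ffun 'I_k -> S}.
Definition mass k (x : omega k) : R := \prod_(i < k) w i (x i).
Definition prob k (A : {set omega k}) : R := \sum_(x in A) mass x.

Definition is_distr k (A : {set omega k}) (mu : omega k -> R) :=
  [/\ forall y, 0 <= mu y, forall y, y \notin A -> mu y = 0 & \sum_y mu y = 1].

(* The squared norm of the point (P_mu[y_i <> x_i])_i of the convex hull of the
   mismatch patterns of x with A; [cdist2 A x] is Talagrand's d_T(A, x)^2. *)
Definition hull_norm2 k (mu : omega k -> R) (x : omega k) : R :=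
  \sum_(i < k) (\sum_y mu y * (y i != x i)%:R) ^+ 2.

Definition cdist2 k (A : {set omega k}) (x : omega k) : R :=
  inf [set hull_norm2 mu x | mu in is_distr A]%classic.

Definition mgf_cdist2 k (A : {set omega k}) : R :=
  \sum_y mass y * expR (cdist2 A y / 4).

Lemma mass_ge0 k (x : omega k) : 0 <= mass x.
Proof. by apply: prodr_ge0 => i _. Qed.

Lemma prob_ge0 k (A : {set omega k}) : 0 <= prob A.
Proof. by apply: sumr_ge0 => x _; apply: mass_ge0. Qed.

Lemma prob_subset k (B C : {set omega k}) : B \subset C -> prob B <= prob C.
Proof.
move=> /fintype.subsetP sBC; rewrite /prob [X in _ <= X]big_mkcond [X in X <= _]big_mkcond.
apply: ler_sum => y _; case: ifP => [/sBC -> //|_].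
by case: ifP => // _; apply: mass_ge0.
Qed.

Lemma prob_gt0_mem k (A : {set omega k}) : 0 < prob A -> exists a, a \in A.
Proof.
move=> A0; apply/existsP; apply: contraTT A0 => /existsPn A_empty.
by rewrite -leNgt /prob big1 // => y yA; move: (A_empty y); rewrite yA.
Qed.

Lemma hull_norm2_ge0 k mu (x : omega k) : 0 <= hull_norm2 mu x.
Proof. by apply: sumr_ge0 => i _; apply: sqr_ge0. Qed.

Lemma is_distr_point k (A : {set omega k}) a :
  a \in A -> is_distr A (fun y => (y == a)%:R).
Proof.
move=> aA; split=> [y|y yA|]; first by case: (y == a).
  by case: eqP yA => // ->; rewrite aA.
by rewrite (bigD1 a) //= eqxx big1 ?addr0 // => y /negPf ->.
Qed.

Lemma has_inf_cdist2 k (A : {set omega k}) x a :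
  a \in A -> has_inf [set hull_norm2 mu x | mu in is_distr A]%classic.
Proof.
move=> aA; split; first by exists (hull_norm2 (fun y => (y == a)%:R) x);
  exists (fun y => (y == a)%:R) => //; apply: is_distr_point.
by exists 0 => _ [mu _ <-]; apply: hull_norm2_ge0.
Qed.

Lemma cdist2_le k (A : {set omega k}) x mu :
  is_distr A mu -> cdist2 A x <= hull_norm2 mu x.
Proof.
move=> hmu; apply: ge_inf; last by exists mu.
by exists 0 => _ [nu _ <-]; apply: hull_norm2_ge0.
Qed.

Lemma cdist2_ge k (A : {set omega k}) x t a : a \in A ->
  (forall mu, is_distr A mu -> t <= hull_norm2 mu x) -> t <= cdist2 A x.
Proof.
move=> aA ht; apply: lb_le_inf; first by case: (has_inf_cdist2 x aA).
by move=> _ [mu hmu <-]; apply: ht.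
Qed.

(* Averaging over mu, then the inequality [(a_i - u c_i)^2 >= 0] with
   [u = t / C], replaces Cauchy-Schwarz. *)
Lemma cdist2_ge_weighted k (A : {set omega k}) (x : omega k) a (c : 'I_k -> R) (t C : R) :
  a \in A -> (forall i, 0 <= c i) -> 0 < C -> \sum_i c i ^+ 2 <= C -> 0 <= t ->
  (forall y, y \in A -> t <= \sum_i c i * (y i != x i)%:R) ->
  t ^+ 2 / C <= cdist2 A x.
Proof.
move=> aA c0 C0 cC t0 tA; apply: (cdist2_ge aA) => mu [mu0 muA mu1].
set q := fun i => \sum_y mu y * (y i != x i)%:R.
have t_le : t <= \sum_i c i * q i.
  have -> : \sum_i c i * q i = \sum_y mu y * \sum_i c i * (y i != x i)%:R.
    under eq_bigr do rewrite mulr_sumr.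
    rewrite exchange_big; apply: eq_bigr => y _ /=.
    by rewrite mulr_sumr; apply: eq_bigr => i _; ring.
  have -> : t = \sum_y mu y * t by rewrite -mulr_suml mu1 mul1r.
  apply: ler_sum => y _.
  have [/tA yt|/muA ->] := boolP (y \in A); [exact: ler_wpM2l | by rewrite !mul0r].
set u := t / C; have u0 : 0 <= u by rewrite divr_ge0 // ltW.
have : 2 * u * (\sum_i c i * q i) - u ^+ 2 * (\sum_i c i ^+ 2) <= hull_norm2 mu x.
  rewrite /hull_norm2 !mulr_sumr -sumrB; apply: ler_sum => i _.
  by rewrite -subr_ge0 -/(q i) (_ : _ - _ = (q i - u * c i) ^+ 2) ?sqr_ge0 //; ring.
have : 2 * u * t <= 2 * u * (\sum_i c i * q i) by apply: ler_wpM2l => //; lra.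
have : u ^+ 2 * (\sum_i c i ^+ 2) <= u ^+ 2 * C by apply: ler_wpM2l; rewrite ?sqr_ge0.
have -> : t ^+ 2 / C = 2 * u * t - u ^+ 2 * C by rewrite /u; field; rewrite gt_eqF.
lra.
Qed.

Definition extend k (y : omega k) (s : S) : omega k.+1 :=
  [ffun i => if unlift ord_max i is Some j then y j else s].
Definition front k (x : omega k.+1) : omega k :=
  [ffun j => x (widen_ord (leqnSn k) j)].

Lemma widen_ord_lift k (j : 'I_k) : widen_ord (leqnSn k) j = lift ord_max j.
Proof. by apply: val_inj; rewrite /= /bump leqNgt ltn_ord. Qed.

Lemma extend_widen k (y : omega k) s j : extend y s (widen_ord (leqnSn k) j) = y j.
Proof. by rewrite ffunE widen_ord_lift liftK. Qed.

Lemma extend_last k (y : omega k) s : extend y s ord_max = s.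
Proof. by rewrite ffunE unlift_none. Qed.

Lemma front_extend k (y : omega k) s : front (extend y s) = y.
Proof. by apply/ffunP => j; rewrite ffunE extend_widen. Qed.

Lemma extend_front k (x : omega k.+1) : extend (front x) (x ord_max) = x.
Proof.
apply/ffunP => i; rewrite ffunE; case: unliftP => [j ->|-> //].
by rewrite ffunE widen_ord_lift.
Qed.

Lemma sum_omegaS k (F : omega k.+1 -> R) :
  \sum_x F x = \sum_(y : omega k) \sum_s F (extend y s).
Proof.
rewrite pair_big /= (reindex (fun ys : omega k * S => extend ys.1 ys.2)) //=.
exists (fun x => (front x, x ord_max)) => [[y s] _|x _] /=.
  by rewrite front_extend extend_last.
exact: extend_front.
Qed.

Lemma mass_extend k (y : omega k) s : mass (extend y s) = mass y * w k s.
Proof.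
rewrite /mass big_ord_recr /= extend_last; congr (_ * _).
by apply: eq_bigr => j _; rewrite extend_widen.
Qed.

Lemma sum_indicator (a : S) (G : S -> R) : \sum_s (s == a)%:R * G s = G a.
Proof. by under eq_bigr do rewrite mulr_natl mulrb; rewrite -big_mkcond big_pred1_eq. Qed.

Section Slice.
Variables (k : nat) (A : {set omega k.+1}) (s : S).

Definition slice : {set omega k} := [set y | extend y s \in A].
Definition shadow : {set omega k} := [set y | [exists s', extend y s' \in A]].
Definition lift_last (y : omega k) : S := odflt s [pick s' | extend y s' \in A].

Lemma extend_lift_last y : y \in shadow -> extend y (lift_last y) \in A.
Proof.
rewrite inE /lift_last => /existsP [s' hs'].
by case: pickP => [s'' -> //|/(_ s')]; rewrite hs'.
Qed.

Lemma slice_sub_shadow : slice \subset shadow.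
Proof. by apply/fintype.subsetP => y; rewrite !inE => ys; apply/existsP; exists s. Qed.

(* Puts mass [1 - lam] on the points [extend y s], distributed as [mu1], and
   mass [lam] on the lifts to [A] of the points of the shadow, distributed as
   [mu2]. *)
Definition mix (lam : R) (mu1 mu2 : omega k -> R) (x : omega k.+1) : R :=
  (1 - lam) * (x ord_max == s)%:R * mu1 (front x)
  + lam * (x ord_max == lift_last (front x))%:R * mu2 (front x).

Lemma sum_mix lam mu1 mu2 (F : omega k.+1 -> R) :
  \sum_x mix lam mu1 mu2 x * F x =
  (1 - lam) * \sum_y mu1 y * F (extend y s)
  + lam * \sum_y mu2 y * F (extend y (lift_last y)).
Proof.
rewrite sum_omegaS !mulr_sumr -big_split /=; apply: eq_bigr => y _.
under eq_bigr do rewrite /mix extend_last front_extend mulrDl.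
rewrite big_split /=; congr (_ + _).
  rewrite -(sum_indicator s (fun s' => (1 - lam) * (mu1 y * F (extend y s')))).
  by apply: eq_bigr => s' _; ring.
rewrite -(sum_indicator (lift_last y) (fun s' => lam * (mu2 y * F (extend y s')))).
by apply: eq_bigr => s' _; ring.
Qed.

Lemma is_distr_mix lam mu1 mu2 : 0 <= lam <= 1 ->
  (forall y, 0 <= mu1 y) -> \sum_y mu1 y = 1 ->
  (forall y, y \notin slice -> (1 - lam) * mu1 y = 0) ->
  is_distr shadow mu2 -> is_distr A (mix lam mu1 mu2).
Proof.
move=> /andP[l0 l1] mu1_ge0 mu1_sum mu1_slice [mu2_ge0 mu2_shadow mu2_sum]; split.
- move=> x; rewrite /mix addr_ge0 // !mulr_ge0 // ?subr_ge0 //; by case: (_ == _).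
- move=> x xA; rewrite /mix.
  have -> : (1 - lam) * (x ord_max == s)%:R * mu1 (front x) = 0.
    case: eqP => [xs|_]; last by rewrite mulr0 mul0r.
    by rewrite mulr1 mu1_slice // inE -xs extend_front.
  case: eqP => [e|_]; last by rewrite mulr0 mul0r addr0.
  rewrite mu2_shadow ?mulr0 ?addr0 //.
  by apply: contra xA => /extend_lift_last; rewrite -e extend_front.
- have := sum_mix lam mu1 mu2 (fun _ => 1).
  by rewrite !(eq_bigr _ (fun i _ => mulr1 _)) mu1_sum mu2_sum => ->; ring.
Qed.

Lemma hull_norm2_mix lam mu1 mu2 y : 0 <= lam <= 1 ->
  (forall y, 0 <= mu2 y) -> \sum_y mu2 y = 1 ->
  hull_norm2 (mix lam mu1 mu2) (extend y s) <=
  lam ^+ 2 + (1 - lam) * hull_norm2 mu1 y + lam * hull_norm2 mu2 y.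
Proof.
move=> /andP[l0 l1] mu2_ge0 mu2_sum.
rewrite /hull_norm2 big_ord_recr /= addrC -addrA; apply: lerD.
  rewrite sum_mix; under eq_bigr do rewrite !extend_last eqxx mulr0.
  under [in X in _ + _ * X]eq_bigr do rewrite !extend_last.
  rewrite big1 // mulr0 add0r.
  set q := \sum_y _; have q0 : 0 <= q.
    by apply: sumr_ge0 => y' _; rewrite mulr_ge0 // ler0n.
  have q1 : q <= 1.
    rewrite -mu2_sum; apply: ler_sum => y' _.
    by rewrite ler_piMr // lern1 leq_b1.
  by rewrite exprMn ler_piMr ?sqr_ge0 // expr_le1.
rewrite !mulr_sumr -big_split /=; apply: ler_sum => i _.
rewrite sum_mix /=; under eq_bigr do rewrite !extend_widen.
under [in X in _ + _ * X]eq_bigr do rewrite !extend_widen.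
set b := \sum_y _; set c := \sum_y _.
rewrite -subr_ge0 (_ : _ - _ = lam * (1 - lam) * (b - c) ^+ 2); last by ring.
by rewrite mulr_ge0 ?sqr_ge0 // mulr_ge0 ?subr_ge0.
Qed.

Lemma cdist2_extend_mix lam mu1 mu2 y : 0 <= lam <= 1 ->
  (forall y, 0 <= mu1 y) -> \sum_y mu1 y = 1 ->
  (forall y, y \notin slice -> (1 - lam) * mu1 y = 0) -> is_distr shadow mu2 ->
  cdist2 A (extend y s) <=
  lam ^+ 2 + (1 - lam) * hull_norm2 mu1 y + lam * hull_norm2 mu2 y.
Proof.
move=> l01 mu1_ge0 mu1_sum mu1_slice [mu2_ge0 mu2_shadow mu2_sum].
apply: le_trans (hull_norm2_mix mu1 y l01 mu2_ge0 mu2_sum).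
exact/cdist2_le/is_distr_mix.
Qed.

Lemma cdist2_extend_le lam y a : 0 <= lam <= 1 -> a \in slice ->
  cdist2 A (extend y s) <=
  lam ^+ 2 + (1 - lam) * cdist2 slice y + lam * cdist2 shadow y.
Proof.
move=> l01 a_slice; have /andP[l0 l1] := l01.
have a_shadow : a \in shadow by apply: (fintype.subsetP slice_sub_shadow).
apply/ler_addgt0Pr => e e0.
have [_ [mu1 [mu1_ge0 mu1_slice mu1_sum] <-] h1] :=
  inf_adherent e0 (has_inf_cdist2 y a_slice).
have [_ [mu2 mu2_distr <-] h2] := inf_adherent e0 (has_inf_cdist2 y a_shadow).
have mu1_slice' y' : y' \notin slice -> (1 - lam) * mu1 y' = 0.
  by move=> /mu1_slice ->; rewrite mulr0.
have := cdist2_extend_mix y l01 mu1_ge0 mu1_sum mu1_slice' mu2_distr.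
have : (1 - lam) * hull_norm2 mu1 y <= (1 - lam) * (cdist2 slice y + e).
  by apply: ler_wpM2l; rewrite ?subr_ge0 // ltW.
have : lam * hull_norm2 mu2 y <= lam * (cdist2 shadow y + e).
  by apply: ler_wpM2l; rewrite // ltW.
lra.
Qed.

Lemma cdist2_extend_le_shadow y a : a \in A -> cdist2 A (extend y s) <= 1 + cdist2 shadow y.
Proof.
move=> aA; have a_shadow : front a \in shadow.
  by rewrite inE; apply/existsP; exists (a ord_max); rewrite extend_front.
apply/ler_addgt0Pr => e e0.
have [_ [mu2 mu2_distr <-] h2] := inf_adherent e0 (has_inf_cdist2 y a_shadow).
have [mu2_ge0 _ mu2_sum] := mu2_distr.
have l01 : 0 <= (1 : R) <= 1 by rewrite ler01 lexx.
have mu2_slice y' : y' \notin slice -> (1 - 1) * mu2 y' = 0 by rewrite subrr mul0r.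
have := cdist2_extend_mix y l01 mu2_ge0 mu2_sum mu2_slice mu2_distr.
rewrite /cdist2 in h2 *; lra.
Qed.

Definition slice_mgf := \sum_y mass y * expR (cdist2 A (extend y s) / 4).

Lemma slice_mgf_le lam a : 0 <= lam <= 1 -> a \in slice ->
  slice_mgf <= expR (lam ^+ 2 / 4) * ((1 - lam) * mgf_cdist2 slice + lam * mgf_cdist2 shadow).
Proof.
move=> l01 a_slice; rewrite /slice_mgf /mgf_cdist2 !mulr_sumr -big_split mulr_sumr.
apply: ler_sum => y _ /=.
set eB := expR (cdist2 slice y / 4); set eC := expR (cdist2 shadow y / 4).
rewrite (_ : _ * (_ + _) = mass y * (expR (lam ^+ 2 / 4) * ((1 - lam) * eB + lam * eC)));
  last by ring.
apply: ler_wpM2l; first exact: mass_ge0.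
apply: (@le_trans _ _ (expR (lam ^+ 2 / 4) * expR ((1 - lam) * (cdist2 slice y / 4)
                                               + lam * (cdist2 shadow y / 4)))).
  by rewrite -expRD ler_expR; have := cdist2_extend_le y l01 a_slice; lra.
by apply: ler_wpM2l; [exact: expR_ge0 | exact: expR_convex_comb].
Qed.

Lemma slice_mgf_le_shadow a : a \in A -> slice_mgf <= expR (1 / 4) * mgf_cdist2 shadow.
Proof.
move=> aA; rewrite /slice_mgf /mgf_cdist2 mulr_sumr; apply: ler_sum => y _.
rewrite mulrCA; apply: ler_wpM2l; first exact: mass_ge0.
by rewrite -expRD ler_expR; have := cdist2_extend_le_shadow y aA; lra.
Qed.

(* With [r = P(slice) / P(shadow)], take [lam = 1] if [r <= 1/2] and
   [lam = 2 (1 - r)] otherwise. *)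
Lemma slice_mgf_bound :
  prob slice * mgf_cdist2 slice <= 1 -> prob shadow * mgf_cdist2 shadow <= 1 ->
  0 < prob shadow -> prob shadow * slice_mgf <= 2 - prob slice / prob shadow.
Proof.
set b := prob slice; set c := prob shadow => hB hC c0.
have b0 : 0 <= b := prob_ge0 slice.
have r1 : b / c <= 1.
  by rewrite ler_pdivrMr // mul1r; apply: prob_subset; exact: slice_sub_shadow.
have [r_le|r_gt] := lerP (b / c) (1 / 2).
  have [y0 y0_shadow] := prob_gt0_mem c0.
  have e_le : expR (1 / 4) * (1 - 1 / 4) <= 1 :> R := expR_mul_subr_le1 _.
  apply: (@le_trans _ _ (expR (1 / 4))); last lra.
  apply: le_trans (ler_wpM2l (ltW c0) (slice_mgf_le_shadow (extend_lift_last y0_shadow))) _.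
  by rewrite mulrCA -[leRHS]mulr1; apply: ler_wpM2l; [exact: expR_ge0 | exact: hC].
have [a a_slice] : exists a, a \in slice.
  apply: prob_gt0_mem; rewrite lt0r b0 andbT; apply: contraTneq r_gt => b_eq0.
  by rewrite -leNgt /b b_eq0 mul0r; lra.
set sigma := 1 - b / c.
have l01 : 0 <= 2 * sigma <= 1 by apply/andP; split; rewrite /sigma; lra.
have := ler_wpM2l (ltW c0) (slice_mgf_le l01 a_slice).
have hX : c * mgf_cdist2 slice * (1 - sigma) <= 1.
  suff -> : c * mgf_cdist2 slice * (1 - sigma) = b * mgf_cdist2 slice by [].
  by rewrite /sigma; field; rewrite gt_eqF.
have s01 : 0 <= sigma <= 1 / 2 by apply/andP; split; rewrite /sigma; lra.
have := talagrand_step_ineq s01 hX hC.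
rewrite (_ : (2 * sigma) ^+ 2 / 4 = sigma ^+ 2); last by rewrite exprMn; field.
have push_c (E x y u v : R) : c * (E * (x * u + y * v)) = E * (x * (c * u) + y * (c * v)).
  by ring.
move=> h_ineq /le_trans; apply; rewrite push_c.
by apply: le_trans h_ineq _; rewrite /sigma; lra.
Qed.

End Slice.

Lemma prob_slices k (A : {set omega k.+1}) : prob A = \sum_s w k s * prob (slice A s).
Proof.
rewrite /prob big_mkcond sum_omegaS exchange_big /=; apply: eq_bigr => s _.
rewrite [in RHS]big_mkcond mulr_sumr; apply: eq_bigr => y _.
by rewrite inE mass_extend; case: (_ \in _); rewrite ?mulr0 // mulrC.
Qed.

Lemma mgf_cdist2_slices k (A : {set omega k.+1}) :
  mgf_cdist2 A = \sum_s w k s * slice_mgf A s.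
Proof.
rewrite /mgf_cdist2 sum_omegaS exchange_big /=; apply: eq_bigr => s _.
by rewrite /slice_mgf mulr_sumr; apply: eq_bigr => y _; rewrite mass_extend; ring.
Qed.

Lemma talagrand0 (A : {set omega 0}) : prob A * mgf_cdist2 A <= 1.
Proof.
have omega0_eq (x y : omega 0) : x = y by apply/ffunP => -[].
have [->|[a aA]] := set_0Vmem A; first by rewrite /prob big_set0 mul0r.
have sum_omega0 (F : omega 0 -> R) : \sum_x F x = F a.
  by rewrite (bigD1 a) //= big1 ?addr0 // => y /eqP[]; apply: omega0_eq.
rewrite /mgf_cdist2 /prob big_mkcond !sum_omega0 aA /mass big_ord0 !mul1r.
rewrite -[leRHS]expR0 ler_expR.
by have := cdist2_le a (is_distr_point aA); rewrite /hull_norm2 big_ord0; lra.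
Qed.

Hypothesis w_sum_le1 : forall i, \sum_s w i s <= 1.

(* With [rho = P(A) / P(shadow)], the slice bounds average to
   [P(A) E[exp(d_T^2 / 4)] <= rho (2 Q - rho) <= Q^2], where [Q = sum_s w k s]. *)
Lemma talagrand_succ k (A : {set omega k.+1}) :
  (forall B : {set omega k}, prob B * mgf_cdist2 B <= 1) -> prob A * mgf_cdist2 A <= 1.
Proof.
move=> IH; rewrite mgf_cdist2_slices prob_slices.
set c := prob (shadow A); have c0 : 0 <= c := prob_ge0 _.
have [c_eq0|c_neq0] := eqVneq c 0.
  rewrite big1 ?mul0r // => s _; suff -> : prob (slice A s) = 0 by rewrite mulr0.
  apply/eqP; rewrite eq_le prob_ge0 andbT -c_eq0.
  exact/prob_subset/slice_sub_shadow.
have c_gt0 : 0 < c by rewrite lt0r c_neq0.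
set Q := \sum_s w k s; have Q0 : 0 <= Q by apply: sumr_ge0.
set rho := (\sum_s w k s * prob (slice A s)) / c.
have rho0 : 0 <= rho by rewrite divr_ge0 // sumr_ge0 // => s _; rewrite mulr_ge0 ?prob_ge0.
set M := \sum_s w k s * (c * slice_mgf A s).
have M_le : M <= 2 * Q - rho.
  rewrite /rho /Q mulr_sumr mulr_suml -sumrB; apply: ler_sum => s _.
  rewrite (_ : 2 * w k s - _ = w k s * (2 - prob (slice A s) / c)); last by ring.
  exact/ler_wpM2l/slice_mgf_bound.
have -> : (\sum_s w k s * prob (slice A s)) * (\sum_s w k s * slice_mgf A s) = rho * M.
  have -> : M = c * \sum_s w k s * slice_mgf A s.
    by rewrite /M mulr_sumr; apply: eq_bigr => s _; ring.
  by rewrite /rho; field.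
have : rho * M <= rho * (2 * Q - rho) by apply: ler_wpM2l.
have : Q * Q <= 1 by rewrite mulr_ile1 ?w_sum_le1.
have := sqr_ge0 (Q - rho).
nra.
Qed.

Theorem talagrand k (A : {set omega k}) : prob A * mgf_cdist2 A <= 1.
Proof. by elim: k A => [|k IH] A; [exact: talagrand0 | exact: talagrand_succ]. Qed.

Corollary talagrand_tail k (A B : {set omega k}) t :
  (forall x, x \in B -> t <= cdist2 A x) -> prob A * prob B <= expR (- (t / 4)).
Proof.
move=> tB; rewrite expRN -div1r ler_pdivlMr ?expR_gt0 //.
apply: le_trans (talagrand A); rewrite -mulrA ler_wpM2l ?prob_ge0 //.
rewrite /prob /mgf_cdist2 mulr_suml [leRHS](bigID (mem B)) /= -[leLHS]addr0.
apply: lerD; last by apply: sumr_ge0 => x _; rewrite mulr_ge0 ?mass_ge0 ?expR_ge0.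
by apply: ler_sum => x xB; rewrite ler_wpM2l ?mass_ge0 // ler_expR ler_pM2r // tB.
Qed.
End ConvexDistance.

Lemma sum_finset_prod (R : comPzSemiRingType) (T : finType) (f : T -> bool -> R) :
  \sum_(X : {set T}) \prod_e f e (e \in X) = \prod_e (f e true + f e false).
Proof.
under [RHS]eq_bigr do rewrite -big_bool.
rewrite bigA_distr_bigA /= (reindex (fun g : {ffun T -> bool} => [set e | g e])) /=.
  by apply: eq_bigr => g _; apply: eq_bigr => e _; rewrite inE.
exists (fun X : {set T} => [ffun e => e \in X]) => [g _|X _].
  by apply/ffunP => e; rewrite ffunE inE.
by apply/setP => e; rewrite inE ffunE.
Qed.

Section VertexExposure.
Variables (R : realType) (n : nat) (p : R).

(* Exposing vertex [i] reveals the edges [{j, i}] with [j < i]; the [i]-th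
   coordinate of [omega] is the set of these edges. *)
Definition top_vertex (e : pairT n) : 'I_n := (val e).2.

Definition exposure_weight (i : nat) (X : {set pairT n}) : R :=
  \prod_e if top_vertex e == i :> nat then (if e \in X then p else 1 - p)
          else (if e \in X then 0 else 1).

Definition graph_of (x : omega {set pairT n} n) : graph n := [set e | e \in x (top_vertex e)].

Definition exposure (E : graph n) : omega {set pairT n} n :=
  [ffun i => [set e in E | top_vertex e == i]].

Lemma exposure_weight_ge0 i X : 0 <= p <= 1 -> 0 <= exposure_weight i X.
Proof.
move=> /andP[p0 p1]; apply: prodr_ge0 => e _.
by case: ifP => _; case: ifP => _ //; rewrite subr_ge0.
Qed.

Lemma sum_exposure_weight i : \sum_X exposure_weight i X = 1.
Proof.
rewrite /exposure_weight (sum_finset_prod (fun e b =>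
  if top_vertex e == i :> nat then (if b then p else 1 - p) else (if b then 0 else 1))).
by rewrite big1 // => e _; case: ifP => _; ring.
Qed.

Lemma graph_of_exposure E : graph_of (exposure E) = E.
Proof. by apply/setP => e; rewrite !inE ffunE inE eqxx andbT. Qed.

Lemma gnp_weightE (E : graph n) : gnp_weight p E = \prod_e if e \in E then p else 1 - p.
Proof.
rewrite (bigID (mem E)) /= (eq_bigr (fun _ => p)) => [|e -> //].
rewrite [X in _ * X](eq_bigr (fun _ => 1 - p)) => [|e /negPf -> //].
rewrite !prodr_const /gnp_weight.
have -> : #|[set: pairT n]%classic| = #|{: pairT n}|.
  by apply: eq_card => e; rewrite classical_sets.in_setT.
by rewrite -(cardC (mem E)) addKn; congr (_ ^+ _ * _ ^+ _); apply: eq_card => e.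
Qed.

Lemma mass_exposure E : mass exposure_weight (exposure E) = gnp_weight p E.
Proof.
rewrite /mass /exposure_weight gnp_weightE.
transitivity (\prod_(i < n) \prod_e
    if top_vertex e == i then (if e \in E then p else 1 - p) else 1).
  apply: eq_bigr => i _; apply: eq_bigr => e _.
  rewrite ffunE inE -[_ == i :> nat]/(top_vertex e == i).
  by case: (top_vertex e == i); rewrite ?andbT ?andbF.
rewrite exchange_big; apply: eq_bigr => e _ /=.
by rewrite (bigD1 (top_vertex e)) //= eqxx big1 ?mulr1 // => i /negPf; rewrite eq_sym => ->.
Qed.

Lemma mass_eq0 x : x != exposure (graph_of x) -> mass exposure_weight x = 0.
Proof.
move=> hx.
have /existsP [i hi] : [exists i, x i != exposure (graph_of x) i].
  apply: contraR hx => /existsPn h; apply/eqP/ffunP => i.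
  by apply/eqP; move: (h i); rewrite negbK.
have /existsP [e he] : [exists e, (e \in x i) != (e \in exposure (graph_of x) i)].
  apply: contraR hi => /existsPn h; apply/eqP/setP => e.
  by apply/eqP; move: (h e); rewrite negbK.
move: he; rewrite ffunE !inE.
have [<-|ne] := eqVneq (top_vertex e) i; first by rewrite andbT eqxx.
rewrite andbF; case exi: (e \in x i) => // _.
rewrite /mass (bigD1 i) //= /exposure_weight (bigD1 e) //= exi.
by rewrite ifF ?mul0r //; apply: contraNF ne => /eqP/val_inj ->.
Qed.

Lemma gnp_probE (F : graph n -> bool) :
  gnp_prob p F = prob exposure_weight [set x | F (graph_of x)].
Proof.
rewrite /prob /gnp_prob (partition_big graph_of predT) //= big_mkcond /=.
apply: eq_bigr => E _; case: ifP => FE.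
  rewrite (bigD1 (exposure E)) /=; last by rewrite inE graph_of_exposure FE eqxx.
  rewrite big1 ?addr0 ?mass_exposure // => x /andP[/andP[_ /eqP <-] hx].
  exact: mass_eq0.
by rewrite big1 // => x /andP[]; rewrite inE => Fx /eqP gx; move: Fx; rewrite gx FE.
Qed.

End VertexExposure.

Section LovaszNumber.
Variable R : realType.

Lemma dotv0l d (b : 'rV[R]_d) : dotv 0 b = 0.
Proof. by rewrite /dotv big1 // => k _; rewrite mxE mul0r. Qed.

Lemma dotv0r d (b : 'rV[R]_d) : dotv b 0 = 0.
Proof. by rewrite /dotv big1 // => k _; rewrite mxE mulr0. Qed.

Lemma sqr_first_le_dotv d (a : 'rV[R]_d.+1) : a 0 ord0 ^+ 2 <= dotv a a.
Proof.
rewrite /dotv (bigD1 ord0) //= expr2 lerDl.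
by apply: sumr_ge0 => k _; rewrite -expr2 sqr_ge0.
Qed.

Lemma cfun0 d : cfun (0 : 'rV[R]_d.+1) = 0.
Proof. by rewrite /cfun eqxx. Qed.

Lemma cfun_ge0 d (a : 'rV[R]_d.+1) : 0 <= cfun a.
Proof.
rewrite /cfun; case: ifP => _ //.
by rewrite divr_ge0 ?sqr_ge0 // (le_trans (sqr_ge0 _) (sqr_first_le_dotv a)).
Qed.

Lemma cfun_le1 d (a : 'rV[R]_d.+1) : cfun a <= 1.
Proof.
rewrite /cfun; case: ifP => _ //.
have [->|D_neq0] := eqVneq (dotv a a) 0; first by rewrite invr0 mulr0.
have D_gt0 : 0 < dotv a a by rewrite lt0r D_neq0 (le_trans (sqr_ge0 _) (sqr_first_le_dotv a)).
by rewrite ler_pdivrMr // mul1r sqr_first_le_dotv.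
Qed.

Lemma has_sup_theta_vals n (E : graph n) : has_sup (@theta_vals R n E).
Proof.
split.
  exists 0, 0%N, (fun _ => 0); split; first by move=> i j _; rewrite dotv0l.
  by rewrite big1 // => i _; rewrite cfun0.
exists n%:R => _ [d [v [_ ->]]].
rewrite -[n in n%:R]card_ord -sumr_const; apply: ler_sum => i _; exact: cfun_le1.
Qed.

Lemma sum_cfun_le_theta n (E : graph n) d (v : 'I_n -> 'rV[R]_d.+1) :
  (forall i j, adj E i j -> dotv (v i) (v j) = 0) -> \sum_i cfun (v i) <= theta R E.
Proof. by move=> hv; apply: sup_upper_bound; [exact: has_sup_theta_vals | exists d, v]. Qed.

(* Zeroing the vectors of the vertices where [y] differs from [x] turns a
   representation of [graph_of x] into one of [graph_of y]: an edge of
   [graph_of y] between two agreeing vertices is exposed at one of them. *)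
Lemma sum_cfun_agree_le_theta n (x y : omega {set pairT n} n) d (v : 'I_n -> 'rV[R]_d.+1) :
  (forall i j, adj (graph_of x) i j -> dotv (v i) (v j) = 0) ->
  \sum_i (x i == y i)%:R * cfun (v i) <= theta R (graph_of y).
Proof.
move=> hv; pose v' i := if x i == y i then v i else 0.
have -> : \sum_i (x i == y i)%:R * cfun (v i) = \sum_i cfun (v' i).
  by apply: eq_bigr => i _; rewrite /v'; case: (_ == _); rewrite ?mul1r ?mul0r ?cfun0.
apply: sum_cfun_le_theta => i j hij; rewrite /v'.
case: eqP => [xi|_]; last by rewrite dotv0l.
case: eqP => [xj|_]; last by rewrite dotv0r.
apply: hv; move/existsP: hij => [e /andP[ey he]]; apply/existsP; exists e.
rewrite he andbT; move: ey; rewrite !inE.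
by case/orP: he => /eqP e_ij; rewrite /top_vertex e_ij /= ?xi ?xj.
Qed.

Lemma cdist2_theta_ge n (m theta0 t : R) (x a : omega {set pairT n} n) :
  let A := [set y | theta R (graph_of y) <= m] in
  a \in A -> 0 < theta0 -> theta R (graph_of x) <= theta0 ->
  0 <= t < theta R (graph_of x) - m -> t ^+ 2 / theta0 <= cdist2 R A x.
Proof.
move=> A aA theta0_gt0 x_le /andP[t0 t_lt].
have e_gt0 : 0 < theta R (graph_of x) - m - t by lra.
have [_ [d [v [hv ->]]] v_gt] := sup_adherent e_gt0 (has_sup_theta_vals (graph_of x)).
have v_le := sum_cfun_le_theta hv.
apply: (cdist2_ge_weighted aA (fun i => cfun_ge0 (v i)) theta0_gt0).
- apply: le_trans x_le; apply: le_trans v_le; apply: ler_sum => i _.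
  by rewrite expr2 ler_piMr ?cfun_ge0 ?cfun_le1.
- exact: t0.
move=> y; rewrite inE => y_le.
have := sum_cfun_agree_le_theta y hv.
rewrite (_ : \sum_i _ = \sum_i cfun (v i) - \sum_i cfun (v i) * (y i != x i)%:R).
  rewrite /theta in y_le v_gt *; lra.
rewrite -sumrB; apply: eq_bigr => i _; rewrite eq_sym.
by case: (_ == _); rewrite /= ?mul1r ?mul0r ?mulr1 ?mulr0 ?subr0 ?subrr.
Qed.

End LovaszNumber.

Theorem lemma1 (R : realType) (n : nat) (p m theta0 xi : R) :
  0 < p < 1 ->
  @gnp_prob R n p (fun E => @theta R n E <= m) >= 1 / 2 ->
  @gnp_prob R n p (fun E => @theta R n E >= m) >= 1 / 2 ->
  0 < theta0 ->
  10 <= xi ->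
  @gnp_prob R n p (fun E => (m + xi <= @theta R n E) && (@theta R n E <= theta0))
    <= 2 * expR (- (xi ^+ 2) / (5 * theta0)).
Proof.
move=> /andP[p0 p1] hA _ theta0_gt0 xi_ge.
have w_ge0 i (X : {set pairT n}) : 0 <= exposure_weight p i X.
  by apply: exposure_weight_ge0; rewrite !ltW.
have w_le1 i : \sum_(X : {set pairT n}) exposure_weight p i X <= 1.
  by rewrite sum_exposure_weight.
rewrite gnp_probE in hA; rewrite gnp_probE.
set A := [set x | _] in hA; set B := [set x | _].
have [a aA] : exists a, a \in A by apply: prob_gt0_mem; lra.
set t := 9 / 10 * xi.
have hB x : x \in B -> t ^+ 2 / theta0 <= cdist2 R A x.
  rewrite inE => /andP[x_ge x_le].
  by apply: (cdist2_theta_ge aA) => //; apply/andP; split; rewrite /t; lra.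
have tail := talagrand_tail w_ge0 w_le1 hB.
have exp_le : expR (- (t ^+ 2 / theta0 / 4)) <= expR (- xi ^+ 2 / (5 * theta0)).
  rewrite ler_expR -subr_ge0 (_ : _ - _ = xi ^+ 2 / theta0 / 400).
    by rewrite !divr_ge0 ?sqr_ge0 // ltW.
  by rewrite /t; field; rewrite gt_eqF.
have := mulr_ge0 (prob_ge0 w_ge0 B) (eqbRL (subr_ge0 _ _) hA).
nra.
Qed.
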